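(* Let $M_1,M'_1\subset\mathbb C^{N_1}$ be generic real-analytic submanifolds through $0$ of the same dimension. Let $M:=M_1\times\{0\}$ and $M':=M'_1\times\{0\}$, both contained in $\mathbb C^N=\mathbb C^{N_1}\times\mathbb C^{N_2}$, and let $H$ be a $k$-equivalence between $(M,0)$ and $(M',0)$ with $k>1$. Write $Z=(Z^1,Z^2)$ and $H=(H^1,H^2)$ according to this decomposition. Then $H^2(Z^1,0)=O(|Z^1|^k)$, and $Z^1\mapsto H^1(Z^1,0)$ is a $k$-equivalence between $(M_1,0)$ and $(M'_1,0)$.
   Context: A real-analytic submanifold with local defining function $\rho=(\rho^1,\dots,\rho^d)$ is generic if the complex gradients $\rho^j_Z$ are linearly independent at each point. For real-analytic submanifolds $M,M'$ of $\mathbb C^m$ through $0$ of the same dimension and $k>1$, a $k$-equivalence between $(M,0)$ and $(M',0)$ is an invertible formal map $H(Z)=\sum_{|\alpha|\ge1}a_\alpha Z^\alpha$ ($a_\alpha\in\mathbb C^m$, nonzero Jacobian at $0$) with $\rho'(H(Z(x)),\overline{H(Z(x))})=O(|x|^k)$ for some (equivalently any) real-analytic parametrization $x\mapsto Z(x)$ of $M$ near $0=Z(0)$, where $\rho'$ is a local defining function of $M'$. *)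

From HB Require Import structures.
From mathcomp Require Import all_boot all_order all_algebra.
From mathcomp Require Import complex.
From mathcomp Require Import reals.
From mathcomp Require Import mpoly.

Set Implicit Arguments.
Unset Strict Implicit.
Unset Printing Implicit Defensive.

Import Order.TTheory GRing.Theory Num.Theory.
Local Open Scope ring_scope.

Definition pseries (R : realType) (n : nat) := 'X_{1..n} -> R[i].

Definition sX (R : realType) (n : nat) (i : 'I_n) : pseries R n :=
  fun mu => if mu == mnm1 i then 1 else 0.

Definition szero (R : realType) (n : nat) : pseries R n := fun _ => 0.

(* coefficientwise complex conjugation (the conjugate of a series in
   REAL variables, or of a series written in (Z, Zbar)) *)
Definition sconj (R : realType) (n : nat) (f : pseries R n) : pseries R n :=
  fun mu => conjc (f mu).

Definition strunc (R : realType) (n : nat) (d : nat) (f : pseries R n)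
  : {mpoly (complex R)[n]} :=
  \sum_(mu : 'X_{1..n < d.+1}) f mu *: 'X_[(mu : 'X_{1..n})].

(* formal composition F(G_1, ..., G_m) of a series F in m variables with
   m series G_i in n variables WITHOUT constant term (the only case used
   below): the coefficient of x^mu only depends on the terms of degree
   <= |mu| of F and of the G_i. *)
Definition scomp (R : realType) (m n : nat) (F : pseries R m)
  (G : 'I_m -> pseries R n) : pseries R n :=
  fun mu => (comp_mpoly [tuple strunc (mdeg mu) (G i) | i < m]
                        (strunc (mdeg mu) F))@_mu.

Definition ord_ge (R : realType) (n : nat) (k : nat) (f : pseries R n) :=
  forall mu : 'X_{1..n}, (mdeg mu < k)%N -> f mu = 0.

(* convergent power series (= germ at 0 of a real-analytic function):
   Cauchy-type coefficient bound *)
Definition convergent (R : realType) (n : nat) (f : pseries R n) :=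
  exists c r : R, 0 < r /\
    forall mu, `|f mu| <= ((c * r ^+ mdeg mu)%:C)%C.

(* Real-analytic functions on C^m are written as series rho(Z, Zbar)   *)
(* in 2m variables indexed by 'I_(m + m): lshift m a is Z_a and         *)
(* rshift m a is Zbar_a.                                               *)
Definition swapZ (m : nat) (i : 'I_(m + m)) : 'I_(m + m) :=
  match split i with inl a => rshift m a | inr a => lshift m a end.

Definition real_valued (R : realType) (m : nat) (rho : pseries R (m + m)) :=
  forall mu : 'X_{1..m + m},
    rho [multinom mu (swapZ i) | i < m + m] = conjc (rho mu).

(* real Jacobian at 0 w.r.t. the real coordinates x_a = Re Z_a,
   y_a = Im Z_a (columns lshift a for x_a, rshift a for y_a):
   d rho/dx_a = rho_{Z_a} + rho_{Zbar_a},  d rho/dy_a = i (rho_{Z_a} - rho_{Zbar_a}) *)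
Definition real_jac0 (R : realType) (m d : nat) (rho : 'I_d -> pseries R (m + m))
  : 'M[R]_(d, m + m) :=
  \matrix_(j, i)
    complex.Re (match split i with
        | inl a => rho j (mnm1 (lshift m a)) + rho j (mnm1 (rshift m a))
        | inr a => 'i%C * (rho j (mnm1 (lshift m a)) - rho j (mnm1 (rshift m a)))
        end).

Definition defining_fun (R : realType) (m d : nat)
  (rho : 'I_d -> pseries R (m + m)) :=
  [/\ forall j, rho j 0%MM = 0,
      forall j, convergent (rho j),
      forall j, real_valued (rho j)
    & row_free (real_jac0 rho)].

Definition cgrad0 (R : realType) (m d : nat) (rho : 'I_d -> pseries R (m + m))
  : 'M[R[i]]_(d, m) :=
  \matrix_(j, a) rho j (mnm1 (lshift m a)).

(* genericity: the complex gradients rho^j_Z are C-linearly independent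
   (at 0, hence at every point near 0) *)
Definition generic (R : realType) (m d : nat) (rho : 'I_d -> pseries R (m + m)) :=
  row_free (cgrad0 rho).

(* (W, Wbar) as the 2m-tuple of series to be plugged into rho(Z, Zbar) *)
Definition sconjZ (R : realType) (m n : nat) (W : 'I_m -> pseries R n)
  : 'I_(m + m) -> pseries R n :=
  fun i => match split i with inl a => W a | inr a => sconj (W a) end.

Definition param_jac0 (R : realType) (m n : nat) (Z : 'I_m -> pseries R n)
  : 'M[R]_(m + m, n) :=
  \matrix_(i, b)
    match split i with
    | inl a => complex.Re (Z a (mnm1 b))
    | inr a => complex.Im (Z a (mnm1 b))
    end.

(* x |-> Z(x), x in R^n, is a real-analytic parametrization near 0 of the
   submanifold M = {rho = 0} (of dimension n = 2m - d) with Z(0) = 0: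
   a real-analytic immersion with values in M. *)
Definition param (R : realType) (m d n : nat) (rho : 'I_d -> pseries R (m + m))
  (Z : 'I_m -> pseries R n) :=
  [/\ (n + d = m + m)%N,
      forall a, Z a 0%MM = 0,
      forall a, convergent (Z a),
      forall j mu, scomp (rho j) (sconjZ Z) mu = 0
    & \rank (param_jac0 Z) = n].

Definition formal_inv (R : realType) (m : nat) (H : 'I_m -> pseries R m) :=
  (forall a, H a 0%MM = 0) /\
  (\matrix_(a, b) H a (mnm1 b) : 'M[R[i]]_m) \in unitmx.

Definition kequiv (R : realType) (m d : nat) (k : nat)
  (rho rho' : 'I_d -> pseries R (m + m)) (H : 'I_m -> pseries R m) :=
  formal_inv H /\
  exists (n : nat) (Z : 'I_m -> pseries R n),
    param rho Z /\
    forall j, ord_ge k (scomp (rho' j) (sconjZ (fun a => scomp (H a) Z))).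

(* Products: C^N = C^N1 x C^N2, coordinates lshift N2 a (Z^1) and      *)
(* rshift N1 b (Z^2).                                                  *)

(* the variables (Z^1, Zbar^1) inside (Z, Zbar) *)
Definition emb1 (N1 N2 : nat) (i : 'I_(N1 + N1)) : 'I_((N1 + N2) + (N1 + N2)) :=
  match split i with
  | inl a => lshift (N1 + N2) (lshift N2 a)
  | inr a => rshift (N1 + N2) (lshift N2 a)
  end.

(* defining function of M_1 x {0} built from a defining function rho1 of
   M_1: (rho1(Z^1, Zbar^1), Re Z^2, Im Z^2) *)
Definition prod_def (R : realType) (N1 N2 d1 : nat)
  (rho1 : 'I_d1 -> pseries R (N1 + N1))
  : 'I_(d1 + (N2 + N2)) -> pseries R ((N1 + N2) + (N1 + N2)) :=
  fun j =>
    match split j with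
    | inl j1 => scomp (rho1 j1) (fun i => @sX R _ (emb1 N2 i))
    | inr t =>
      match split t with
      | inl b => fun mu =>
          (@sX R _ (lshift (N1 + N2) (rshift N1 b)) mu
           + @sX R _ (rshift (N1 + N2) (rshift N1 b)) mu) / 2%:R
      | inr b => fun mu =>
          (@sX R _ (lshift (N1 + N2) (rshift N1 b)) mu
           - @sX R _ (rshift (N1 + N2) (rshift N1 b)) mu) / (2%:R * 'i%C)
      end
    end.

Definition restr1 (R : realType) (N1 N2 : nat) (f : pseries R (N1 + N2))
  : pseries R N1 :=
  scomp f (fun i => match split i with inl a => @sX R _ a | inr _ => @szero R N1 end).

(* Let Z = (Z^1, Z^2) parametrize M = M_1 x {0}.  The defining equations
   Re Z^2 = Im Z^2 = 0 of M force Z^2 = 0, so Z^1 parametrizes M_1; the same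
   equations for M', evaluated on H(Z), show that H^2(Z^1(x), 0) vanishes to
   order k.  Genericity of M_1 makes the complex linear part L of Z^1 onto
   C^N1: the real Jacobian of Z^1 spans the kernel of the real Jacobian of
   rho_1 (a dimension count), so a complex linear form killing L kills
   {v | Re (rho_Z v) = 0}, which spans C^N1 over C since rho_Z has a right
   inverse.  Composing with a map whose linear part is onto cannot raise the
   order of vanishing (look at the initial form), hence H^2(Z^1, 0) = O(k).
   As k > 1, the Jacobian of H is block triangular, so Z^1 |-> H^1(Z^1, 0) is
   invertible, and the first equations of M' give the k-equivalence. *)

From HB Require Import structures.
From mathcomp Require Import all_boot all_order all_algebra.
From mathcomp Require Import complex reals mpoly.
From mathcomp Require Import zify ring lra.

Set Implicit Arguments.
Unset Strict Implicit.
Unset Printing Implicit Defensive.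

Import Order.TTheory GRing.Theory Num.Theory.
Local Open Scope ring_scope.

Lemma eq_mnm1 n (i j : 'I_n) : (U_(i) == U_(j) :> 'X_{1..n})%MM = (i == j).
Proof.
apply/eqP/eqP => [e|-> //].
by apply/eqP; move: (mnm1E i j); rewrite e mnm1E eqxx; case: (i == j).
Qed.

Lemma mdeg_lt1 n (m : 'X_{1..n}) : (mdeg m < 1)%N -> m = 0%MM.
Proof. by rewrite ltnS leqn0 mdeg_eq0 => /eqP. Qed.

Lemma mdeg_lt2 n (m : 'X_{1..n}) :
  (mdeg m < 2)%N -> m = 0%MM \/ exists i, m = U_(i)%MM.
Proof.
move=> m_lt2; have [/eqP|m_gt0] := posnP (mdeg m); first by rewrite mdeg_eq0 => /eqP; left.
have /mdeg1P [i /eqP ->] : mdeg m == 1%N by rewrite eqn_leq -ltnS m_lt2.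
by right; exists i.
Qed.

Lemma split_lshift m n (a : 'I_m) : split (lshift n a) = inl a.
Proof. exact: (unsplitK (inl a)). Qed.

Lemma split_rshift m n (b : 'I_n) : split (rshift m b) = inr b.
Proof. exact: (unsplitK (inr b)). Qed.

(** * Order of vanishing of polynomials *)

Section MpolyOrder.
Variables (n : nat) (R : ringType).
Implicit Types (p q a b : {mpoly R[n]}).

Definition mord_ge e p := forall m : 'X_{1..n}, (mdeg m < e)%N -> p@_m = 0.

Definition initial_eq e p q := [/\ mord_ge e p, mord_ge e q & mord_ge e.+1 (p - q)].

Lemma mord_ge0 e : mord_ge e 0.
Proof. by move=> m _; rewrite mcoeff0. Qed.

Lemma mord_ge_ord0 p : mord_ge 0 p.
Proof. by []. Qed.

Lemma mord_geW e e' p : (e' <= e)%N -> mord_ge e p -> mord_ge e' p.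
Proof. by move=> le_e'e p_e m m_e'; apply: p_e; apply: leq_trans le_e'e. Qed.

Lemma mord_geD e p q : mord_ge e p -> mord_ge e q -> mord_ge e (p + q).
Proof. by move=> p_e q_e m m_e; rewrite mcoeffD p_e ?q_e ?addr0. Qed.

Lemma mord_geZ e c p : mord_ge e p -> mord_ge e (c *: p).
Proof. by move=> p_e m m_e; rewrite mcoeffZ p_e ?mulr0. Qed.

Lemma mord_ge_sum e (I : Type) (r : seq I) (P : pred I) (F : I -> {mpoly R[n]}) :
  (forall i, P i -> mord_ge e (F i)) -> mord_ge e (\sum_(i <- r | P i) F i).
Proof.
by move=> F_e; elim/big_rec: _ => [|i x Pi]; [apply: mord_ge0 | apply/mord_geD/F_e].
Qed.

Lemma mord_geM e f p q : mord_ge e p -> mord_ge f q -> mord_ge (e + f) (p * q).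
Proof.
move=> p_e q_f m m_ef; rewrite mcoeffM big1 // => -[m1 m2] /= /eqP m_eq.
have [m1_e|m1_e] := ltnP (mdeg m1) e; first by rewrite p_e ?mul0r.
have : (mdeg m1 + mdeg m2 < e + f)%N by rewrite -mdegD -m_eq.
by move=> lt_sum; rewrite q_f ?mulr0 //; move: m1_e lt_sum; lia.
Qed.

Lemma mord_ge_prod (I : Type) (r : seq I) (P : pred I) (E : I -> nat)
    (F : I -> {mpoly R[n]}) :
  (forall i, mord_ge (E i) (F i)) ->
  mord_ge (\sum_(i <- r | P i) E i) (\prod_(i <- r | P i) F i).
Proof.
move=> F_E; elim/big_rec2: _ => [|i e p _]; first exact: mord_ge_ord0.
exact: mord_geM.
Qed.

Lemma mord_geX e p k : mord_ge e p -> mord_ge (e * k) (p ^+ k).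
Proof.
move=> p_e; elim: k => [|k ih]; first by rewrite muln0; apply: mord_ge_ord0.
by rewrite exprS mulnS; apply: mord_geM.
Qed.

Let mulrBB a a' b b' : a * b - a' * b' = (a - a') * b + a' * (b - b').
Proof. by rewrite mulrBl mulrBr addrA subrK. Qed.

Lemma mord_ge_mulB e a a' b b' :
  mord_ge e (a - a') -> mord_ge e (b - b') -> mord_ge e (a * b - a' * b').
Proof.
move=> a_e b_e; rewrite mulrBB; apply: mord_geD.
  by rewrite -[e]addn0; apply: mord_geM a_e (mord_ge_ord0 _).
by rewrite -[e]add0n; apply: mord_geM (mord_ge_ord0 _) b_e.
Qed.

Lemma initial_eq1 : initial_eq 0 1 1.
Proof. by split; rewrite ?subrr; [apply: mord_ge_ord0 | apply: mord_ge_ord0 | apply: mord_ge0]. Qed.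

Lemma initial_eqM e f a a' b b' :
  initial_eq e a a' -> initial_eq f b b' -> initial_eq (e + f) (a * b) (a' * b').
Proof.
move=> [a_e a'_e aa'_e] [b_f b'_f bb'_f]; split; try exact: mord_geM.
by rewrite mulrBB; apply: mord_geD; [rewrite -addSn | rewrite -addnS]; apply: mord_geM.
Qed.

Lemma initial_eqX e p q k : initial_eq e p q -> initial_eq (e * k) (p ^+ k) (q ^+ k).
Proof.
move=> pq_e; elim: k => [|k ih]; first by rewrite muln0 !expr0; apply: initial_eq1.
by rewrite !exprS mulnS; apply: initial_eqM.
Qed.

End MpolyOrder.

Section MpolyComp.
Variables (n k : nat) (R : comRingType).
Implicit Types (p : {mpoly R[n]}) (lq : n.-tuple {mpoly R[k]}).

Lemma comp_mord_ge e lq p :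
  (forall i, mord_ge 1 (tnth lq i)) -> mord_ge e p -> mord_ge e (p \mPo lq).
Proof.
move=> lq_1 p_e; rewrite comp_mpolyEX; apply: mord_ge_sum => m _.
have [m_e|m_e] := ltnP (mdeg m) e; first by rewrite p_e // scale0r; apply: mord_ge0.
apply/mord_geZ/(mord_geW m_e); rewrite comp_mpolyX mdegE; apply: mord_ge_prod => i.
by have := mord_geX (k := m i) (lq_1 i); rewrite mul1n.
Qed.

Lemma comp_mord_geB e lq (lq' : n.-tuple {mpoly R[k]}) p :
  (forall i, mord_ge e (tnth lq i - tnth lq' i)) ->
  mord_ge e ((p \mPo lq) - (p \mPo lq')).
Proof.
move=> lq_e; rewrite !comp_mpolyEX -sumrB; apply: mord_ge_sum => m _.
rewrite -scalerBr !comp_mpolyX; apply: mord_geZ.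
elim/big_rec2: _ => [|i x y _ xy_e]; first by rewrite subrr; apply: mord_ge0.
apply: mord_ge_mulB xy_e; elim: (m i) => [|j ih]; first by rewrite subrr; apply: mord_ge0.
by rewrite !exprS; apply: mord_ge_mulB.
Qed.

Lemma comp_initial_eq e lq (lq' : n.-tuple {mpoly R[k]}) p :
  (forall i, initial_eq 1 (tnth lq i) (tnth lq' i)) -> mord_ge e p ->
  mord_ge e.+1 ((p \mPo lq) - (p \mPo lq')).
Proof.
move=> lq_1 p_e; rewrite !comp_mpolyEX -sumrB; apply: mord_ge_sum => m _.
have [m_e|m_e] := ltnP (mdeg m) e; first by rewrite p_e // !scale0r subrr; apply: mord_ge0.
rewrite -scalerBr !comp_mpolyX; apply/mord_geZ/(mord_geW (e := (mdeg m).+1)) => //.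
suff [] : initial_eq (mdeg m) (\prod_i tnth lq i ^+ m i) (\prod_i tnth lq' i ^+ m i) by [].
rewrite mdegE; elim/big_rec3: _ => [|i s x y _ xy_s]; first exact: initial_eq1.
by apply: initial_eqM xy_s; have := initial_eqX (m i) (lq_1 i); rewrite mul1n.
Qed.

Lemma comp_mpolyA l (lq : k.-tuple {mpoly R[l]}) (lr : n.-tuple {mpoly R[k]}) p :
  (p \mPo lr) \mPo lq = p \mPo [tuple tnth lr i \mPo lq | i < n].
Proof.
rewrite [p \mPo lr]comp_mpolyEX [p \mPo _]comp_mpolyEX raddf_sum /=.
apply: eq_bigr => m _; rewrite comp_mpolyZ !comp_mpolyX rmorph_prod /=.
by congr (_ *: _); apply: eq_bigr => i _; rewrite rmorphXn tnth_map tnth_ord_tuple.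
Qed.

End MpolyComp.

Section LinearTuple.
Variable R : comRingType.

Definition mx_tuple N n (L : 'M[R]_(N, n)) : N.-tuple {mpoly R[n]} :=
  [tuple \sum_b L a b *: 'X_b | a < N].

Lemma mcoeff_mx_tuple N n (L : 'M[R]_(N, n)) a m :
  (tnth (mx_tuple L) a)@_m = \sum_b L a b * (U_(b)%MM == m)%:R.
Proof.
by rewrite tnth_map tnth_ord_tuple raddf_sum /=; apply: eq_bigr => b _; rewrite mcoeffZ mcoeffX.
Qed.

Lemma mcoeff0_mx_tuple N n (L : 'M[R]_(N, n)) a : (tnth (mx_tuple L) a)@_0%MM = 0.
Proof. by rewrite mcoeff_mx_tuple big1 // => b _; rewrite mnm1_eq0 mulr0. Qed.

Lemma mcoeff1_mx_tuple N n (L : 'M[R]_(N, n)) a b :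
  (tnth (mx_tuple L) a)@_U_(b)%MM = L a b.
Proof.
rewrite mcoeff_mx_tuple (bigD1 b) //= eqxx mulr1 big1 ?addr0 // => c c_b.
by rewrite eq_mnm1 (negbTE c_b) mulr0.
Qed.

Lemma mx_tuple_mord_ge1 N n (L : 'M[R]_(N, n)) a : mord_ge 1 (tnth (mx_tuple L) a).
Proof. by move=> m /mdeg_lt1 ->; apply: mcoeff0_mx_tuple. Qed.

Lemma comp_mx_tuple N n l (L : 'M[R]_(N, n)) (B : 'M[R]_(n, l)) :
  [tuple tnth (mx_tuple L) a \mPo mx_tuple B | a < N] = mx_tuple (L *m B).
Proof.
apply: eq_from_tnth => a; rewrite !tnth_map !tnth_ord_tuple raddf_sum /=.
under eq_bigr do rewrite comp_mpolyZ comp_mpolyXU -tnth_nth tnth_map tnth_ord_tuple scaler_sumr.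
rewrite exchange_big /=; apply: eq_bigr => c _; rewrite mxE scaler_suml.
by apply: eq_bigr => b _; rewrite scalerA.
Qed.

Lemma mx_tuple1 N : mx_tuple (1%:M : 'M[R]_N) = [tuple 'X_i | i < N].
Proof.
apply: eq_from_tnth => a; rewrite !tnth_map !tnth_ord_tuple (bigD1 a) //= mxE eqxx scale1r.
by rewrite big1 ?addr0 // => b b_a; rewrite mxE eq_sym (negbTE b_a) scale0r.
Qed.

End LinearTuple.

Lemma mord_ge_comp_row_free (F : fieldType) e N n (L : 'M[F]_(N, n)) (p : {mpoly F[N]}) :
  row_free L -> mord_ge e (p \mPo mx_tuple L) -> mord_ge e p.
Proof.
move=> /row_freeP [B LB1] pL_e.
have -> : p = (p \mPo mx_tuple L) \mPo mx_tuple B.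
  by rewrite comp_mpolyA comp_mx_tuple LB1 mx_tuple1 comp_mpoly_id.
by apply: comp_mord_ge pL_e => b; apply: mx_tuple_mord_ge1.
Qed.

(** * Composition of formal power series *)

Section PowerSeries.
Variable R : realType.
Local Notation C := R[i].

Lemma mcoeff_strunc n d (f : pseries R n) m :
  (strunc d f)@_m = if (mdeg m <= d)%N then f m else 0.
Proof.
rewrite raddf_sum /=; under eq_bigr do rewrite mcoeffZ mcoeffX.
case: ifPn => [m_d|m_d]; last first.
  rewrite big1 // => nu _; case: eqP => [nu_m|]; last by rewrite mulr0.
  by move: m_d (bmdeg nu); rewrite -nu_m ltnS => /negPf ->.
have m_d' : (mdeg m < d.+1)%N by [].
rewrite (bigD1 (BMultinom m_d')) //= eqxx mulr1 big1 ?addr0 // => nu nu_m.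
by move: nu_m; rewrite bmeqP /= => /negbTE ->; rewrite mulr0.
Qed.

Lemma strunc_mord_ge1 n d (g : pseries R n) : g 0%MM = 0 -> mord_ge 1 (strunc d g).
Proof. by move=> g0 m /mdeg_lt1 ->; rewrite mcoeff_strunc g0; case: ifP. Qed.

Definition strunc_tuple m n d (G : 'I_m -> pseries R n) : m.-tuple {mpoly C[n]} :=
  [tuple strunc d (G i) | i < m].

Lemma mcoeff_strunc_tuple m n d (G : 'I_m -> pseries R n) i nu :
  (mdeg nu <= d)%N -> (tnth (strunc_tuple d G) i)@_nu = G i nu.
Proof. by move=> nu_d; rewrite tnth_map tnth_ord_tuple mcoeff_strunc nu_d. Qed.

Lemma strunc_tuple_mord_ge1 m n d (G : 'I_m -> pseries R n) i :
  G i 0%MM = 0 -> mord_ge 1 (tnth (strunc_tuple d G) i).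
Proof. by rewrite tnth_map tnth_ord_tuple; apply: strunc_mord_ge1. Qed.

Section Composition.
Variables (m n : nat) (F : pseries R m) (G : 'I_m -> pseries R n).

Lemma scompE (P : {mpoly C[m]}) (Q : m.-tuple {mpoly C[n]}) mu :
  (forall nu, (mdeg nu <= mdeg mu)%N -> P@_nu = F nu) ->
  (forall i nu, (mdeg nu <= mdeg mu)%N -> (tnth Q i)@_nu = G i nu) ->
  (forall i, mord_ge 1 (tnth Q i)) ->
  scomp F G mu = (P \mPo Q)@_mu.
Proof.
move=> PF QG Q_1; rewrite /scomp -/(strunc_tuple _ G); set d := mdeg mu.
have T_1 i : mord_ge 1 (tnth (strunc_tuple d G) i).
  by apply: strunc_tuple_mord_ge1; rewrite -QG ?mdeg0 //; apply: Q_1; rewrite mdeg0.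
have FP : mord_ge d.+1 ((strunc d F \mPo strunc_tuple d G) - (P \mPo strunc_tuple d G)).
  rewrite -raddfB /=; apply: comp_mord_ge => // nu; rewrite ltnS => nu_d.
  by rewrite mcoeffB mcoeff_strunc nu_d PF ?subrr.
have TQ : mord_ge d.+1 ((P \mPo strunc_tuple d G) - (P \mPo Q)).
  apply: comp_mord_geB => i nu; rewrite ltnS => nu_d.
  by rewrite mcoeffB mcoeff_strunc_tuple // QG ?subrr.
have /eqP := mord_geD FP TQ (ltnSn d).
by rewrite addrA subrK mcoeffB subr_eq0 => /eqP.
Qed.

Hypothesis G0 : forall i, G i 0%MM = 0.

Lemma scompE_strunc (P : {mpoly C[m]}) mu :
  (forall nu, (mdeg nu <= mdeg mu)%N -> P@_nu = F nu) ->
  scomp F G mu = (P \mPo strunc_tuple (mdeg mu) G)@_mu.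
Proof.
move=> PF; apply: scompE => // [i nu|i]; first exact: mcoeff_strunc_tuple.
exact: strunc_tuple_mord_ge1.
Qed.

Lemma scomp_coef0 : scomp F G 0%MM = F 0%MM.
Proof.
rewrite (@scompE_strunc (F 0%MM)%:MP) ?comp_mpolyC ?mcoeffC ?eqxx ?mulr1 // => nu.
by rewrite mdeg0 leqn0 mdeg_eq0 => /eqP ->; rewrite mcoeffC eqxx mulr1.
Qed.

Lemma scomp_coef1 b : F 0%MM = 0 ->
  scomp F G U_(b)%MM = \sum_i F U_(i)%MM * G i U_(b)%MM.
Proof.
move=> F0; rewrite (@scompE_strunc (\sum_i F U_(i)%MM *: 'X_i)) => [|nu].
  rewrite mdeg1 (raddf_sum (comp_mpoly (strunc_tuple 1 G))) raddf_sum /=.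
  apply: eq_bigr => i _.
  by rewrite comp_mpolyZ comp_mpolyXU -tnth_nth mcoeffZ mcoeff_strunc_tuple ?mdeg1.
rewrite mdeg1 => nu_1; have [->|[j ->]] := mdeg_lt2 (nu_1 : (mdeg nu < 2)%N).
  by rewrite raddf_sum /= F0 big1 // => i _; rewrite mcoeffZ mcoeffX mnm1_eq0 mulr0.
rewrite raddf_sum /= (bigD1 j) //= mcoeffZ mcoeffX eqxx mulr1 big1 ?addr0 // => i i_j.
by rewrite mcoeffZ mcoeffX eq_mnm1 (negbTE i_j) mulr0.
Qed.

End Composition.

Lemma eq_scompr m n (F : pseries R m) (G G' : 'I_m -> pseries R n) mu :
  (forall i nu, G i nu = G' i nu) -> scomp F G mu = scomp F G' mu.
Proof.
move=> GG'; rewrite /scomp -/(strunc_tuple _ G) -/(strunc_tuple _ G').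
suff -> : strunc_tuple (mdeg mu) G = strunc_tuple (mdeg mu) G' by [].
apply: eq_from_tnth => i; rewrite !tnth_map !tnth_ord_tuple.
by apply: eq_bigr => nu _; rewrite GG'.
Qed.

Lemma scomp_lincomb m n (a b : C) (F F1 F2 : pseries R m) (G : 'I_m -> pseries R n) mu :
  (forall nu, F nu = a * F1 nu + b * F2 nu) ->
  scomp F G mu = a * scomp F1 G mu + b * scomp F2 G mu.
Proof.
move=> F_lin; rewrite /scomp.
have -> : strunc (mdeg mu) F = a *: strunc (mdeg mu) F1 + b *: strunc (mdeg mu) F2.
  apply/mpolyP => nu; rewrite mcoeffD !mcoeffZ !mcoeff_strunc.
  by case: ifP; rewrite ?F_lin ?mulr0 ?addr0.
by rewrite comp_mpolyD !comp_mpolyZ mcoeffD; congr (_ + _); apply: mcoeffZ.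
Qed.

Lemma scomp_szero m n (G : 'I_m -> pseries R n) mu : scomp (@szero R m) G mu = 0.
Proof.
rewrite /scomp; have -> : strunc (mdeg mu) (@szero R m) = 0.
  by apply/mpolyP => nu; rewrite mcoeff_strunc mcoeff0; case: ifP.
by rewrite comp_mpoly0 mcoeff0.
Qed.

Lemma sX_coef0 n (i : 'I_n) : @sX R n i 0%MM = 0.
Proof. by rewrite /sX eq_sym mnm1_eq0. Qed.

Lemma scomp_sX m n (G : 'I_m -> pseries R n) i mu :
  (forall i, G i 0%MM = 0) -> scomp (@sX R m i) G mu = G i mu.
Proof.
move=> G0; rewrite (@scompE_strunc _ _ _ _ G0 'X_i) //.
  by rewrite comp_mpolyXU -tnth_nth mcoeff_strunc_tuple.
by move=> nu _; rewrite mcoeffX /sX eq_sym; case: eqP.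
Qed.

Lemma scompA m1 m2 m3 (F : pseries R m1) (G : 'I_m1 -> pseries R m2)
    (K : 'I_m2 -> pseries R m3) mu :
  (forall i, G i 0%MM = 0) -> (forall j, K j 0%MM = 0) ->
  scomp (scomp F G) K mu = scomp F (fun i => scomp (G i) K) mu.
Proof.
move=> G0 K0; set d := mdeg mu.
have Gd_1 i := strunc_tuple_mord_ge1 d (G0 i).
have Kd_1 j := strunc_tuple_mord_ge1 d (K0 j).
have FG_d nu : (mdeg nu <= d)%N ->
    scomp F G nu = ((strunc d F \mPo strunc_tuple d G)@_nu).
  move=> nu_d; apply: scompE => [nu' nu'_nu|i nu' nu'_nu|//].
    by rewrite mcoeff_strunc (leq_trans nu'_nu nu_d).
  by rewrite mcoeff_strunc_tuple ?(leq_trans nu'_nu nu_d).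
have GK_d i nu : (mdeg nu <= d)%N ->
    scomp (G i) K nu = ((tnth (strunc_tuple d G) i \mPo strunc_tuple d K)@_nu).
  move=> nu_d; apply: scompE => [nu' nu'_nu|j nu' nu'_nu|//].
    by rewrite mcoeff_strunc_tuple ?(leq_trans nu'_nu nu_d).
  by rewrite mcoeff_strunc_tuple ?(leq_trans nu'_nu nu_d).
rewrite (scompE (P := strunc d F \mPo strunc_tuple d G) (Q := strunc_tuple d K))
  => [|nu nu_d|j nu nu_d|//]; last 2 first.
- by rewrite FG_d.
- exact: mcoeff_strunc_tuple.
rewrite comp_mpolyA; symmetry; apply: scompE => [nu nu_d|i nu nu_d|i].
- by rewrite mcoeff_strunc nu_d.
- by rewrite tnth_map tnth_ord_tuple GK_d.
- by rewrite tnth_map tnth_ord_tuple; apply: comp_mord_ge.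
Qed.

End PowerSeries.

Section LinearPart.
Variable R : realType.
Local Notation C := R[i].

Definition cjac0 N n (Z : 'I_N -> pseries R n) : 'M[C]_(N, n) := \matrix_(a, b) Z a U_(b)%MM.

Lemma strunc_mord_ge e d n (f : pseries R n) : ord_ge e f -> mord_ge e (strunc d f).
Proof. by move=> f_e nu nu_e; rewrite mcoeff_strunc f_e ?if_same. Qed.

Lemma strunc_tuple_initial_eq N n d (Z : 'I_N -> pseries R n) a :
  (0 < d)%N -> Z a 0%MM = 0 ->
  initial_eq 1 (tnth (strunc_tuple d Z) a) (tnth (mx_tuple (cjac0 Z)) a).
Proof.
move=> d_gt0 Za0; split; [exact: strunc_tuple_mord_ge1 | exact: mx_tuple_mord_ge1 |].
move=> m /mdeg_lt2 [->|[b ->]]; rewrite mcoeffB mcoeff_strunc_tuple ?mdeg0 ?mdeg1 //.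
  by rewrite mcoeff0_mx_tuple Za0 subrr.
by rewrite mcoeff1_mx_tuple mxE subrr.
Qed.

Lemma scomp_initial N n j (f : pseries R N) (Z : 'I_N -> pseries R n) mu :
  (forall a, Z a 0%MM = 0) -> ord_ge j f -> mdeg mu = j ->
  scomp f Z mu = (strunc j f \mPo mx_tuple (cjac0 Z))@_mu.
Proof.
move=> Z0 f_j mu_j.
rewrite (scompE (P := strunc j f) (Q := strunc_tuple j.+1 Z)) => [|nu|a nu|a]; first last.
- exact: strunc_tuple_mord_ge1.
- by rewrite mu_j => nu_j; rewrite mcoeff_strunc_tuple // (leq_trans nu_j).
- by rewrite mu_j => nu_j; rewrite mcoeff_strunc nu_j.
have Zj1_Z1 : mord_ge j.+1
    ((strunc j f \mPo strunc_tuple j.+1 Z) - (strunc j f \mPo mx_tuple (cjac0 Z))).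
  by apply: comp_initial_eq (strunc_mord_ge _ f_j) => a; apply: strunc_tuple_initial_eq.
by apply/eqP; rewrite -subr_eq0 -mcoeffB Zj1_Z1 ?mu_j.
Qed.

Lemma ord_ge_scomp_row_free k N n (f : pseries R N) (Z : 'I_N -> pseries R n) :
  (forall a, Z a 0%MM = 0) -> row_free (cjac0 Z) ->
  ord_ge k (scomp f Z) -> ord_ge k f.
Proof.
move=> Z0 Zfree fZ_k; suff f_j j : (j <= k)%N -> ord_ge j f by apply: f_j.
elim: j => [_ nu //|j ih j_k nu]; have f_j := ih (ltnW j_k).
(* The initial form of [f], composed with [cjac0 Z], vanishes in degree [j]. *)
rewrite ltnS leq_eqVlt => /orP [/eqP nu_j|]; last exact: f_j.
have fZ_j1 : mord_ge j.+1 (strunc j f \mPo mx_tuple (cjac0 Z)).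
  move=> m; rewrite ltnS leq_eqVlt => /orP [/eqP m_j|m_j].
    by rewrite -scomp_initial ?fZ_k ?m_j.
  by apply: comp_mord_ge m_j; [apply: mx_tuple_mord_ge1 | apply: strunc_mord_ge].
have /(_ nu) := mord_ge_comp_row_free Zfree fZ_j1.
by rewrite mcoeff_strunc nu_j !leqnn => /(_ isT).
Qed.

End LinearPart.

(** * Generic submanifolds *)

Lemma ker_eq_colspan (F : fieldType) d N n (J : 'M[F]_(d, N)) (P : 'M[F]_(N, n))
    (y : 'cV[F]_N) :
  row_free J -> \rank P = n -> (n + d = N)%N -> J *m P = 0 -> J *m y = 0 ->
  exists x : 'cV[F]_n, y = P *m x.
Proof.
move=> Jfree rkP dimN JP0 Jy0.
have PT_ker : (P^T <= kermx J^T)%MS by rewrite sub_kermx -trmx_mul JP0 trmx0.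
have [_ ker_PT] := mxrank_leqif_sup PT_ker.
have ker_sub : (kermx J^T <= P^T)%MS.
  rewrite -ker_PT mxrank_ker !mxrank_tr rkP; move/eqP: Jfree => ->; apply/eqP; lia.
have yT_ker : (y^T <= kermx J^T)%MS by rewrite sub_kermx -trmx_mul Jy0 trmx0.
have /submxP [x yx] := submx_trans yT_ker ker_sub.
by exists x^T; rewrite -[y]trmxK yx trmx_mul trmxK.
Qed.

Section Genericity.
Variable R : realType.
Local Notation C := R[i].
Local Notation Re := (@complex.Re R).
Local Notation Im := (@complex.Im R).

Definition re_im_mx N p (A : 'M[C]_(N, p)) : 'M[R]_(N + N, p) :=
  \matrix_(i, b) match split i with inl a => Re (A a b) | inr a => Im (A a b) end.

Lemma re_im_mx_inj N p : injective (@re_im_mx N p).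
Proof.
move=> A B /matrixP AB; apply/matrixP => a b; apply/eqP; rewrite eq_complex.
have := AB (lshift N a) b; have := AB (rshift N a) b.
by rewrite !mxE split_lshift split_rshift => -> ->; rewrite !eqxx.
Qed.

Lemma re_im_mxM N p q (A : 'M[C]_(N, p)) (x : 'M[R]_(p, q)) :
  re_im_mx (A *m map_mx (real_complex R) x) = re_im_mx A *m x.
Proof.
apply/matrixP => i c; rewrite !mxE; case: (split_ordP i) => a ->;
  rewrite ?split_lshift ?split_rshift !mxE raddf_sum; apply: eq_bigr => b _;
  by rewrite !mxE ?split_lshift ?split_rshift; case: (A a b) => ? ? /=; ring.
Qed.

Lemma param_jac0E N n (Z : 'I_N -> pseries R n) : param_jac0 Z = re_im_mx (cjac0 Z).
Proof. by apply/matrixP => i b; rewrite !mxE; case: (split i) => a; rewrite mxE. Qed.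

Lemma real_valued_coef1 N (rho : pseries R (N + N)) a :
  real_valued rho -> rho U_(rshift N a)%MM = conjc (rho U_(lshift N a)%MM).
Proof.
move=> rho_real; rewrite -rho_real; congr (rho _); apply/mnmP => i.
rewrite mnmE !mnm1E /swapZ; case: split_ordP => b ->.
  by rewrite eq_rlshift eq_lrshift.
by rewrite !eq_rshift !eq_lshift.
Qed.

Lemma real_jac0_re_im d N p (rho : 'I_d -> pseries R (N + N)) (A : 'M[C]_(N, p)) :
  (forall j, real_valued (rho j)) ->
  real_jac0 rho *m re_im_mx A = map_mx Re (cgrad0 rho *m A) *+ 2.
Proof.
move=> rho_real; apply/matrixP => j b; rewrite mulmxnE !mxE raddf_sum -sumrMnl big_split_ord /=.
rewrite -big_split /=; apply: eq_bigr => a _.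
rewrite !mxE split_lshift split_rshift real_valued_coef1 //.
by case: (rho j _) => ? ?; case: (A a b) => ? ? /=; ring.
Qed.

Lemma sconjZ_coef0 m n (W : 'I_m -> pseries R n) i :
  (forall a, W a 0%MM = 0) -> sconjZ W i 0%MM = 0.
Proof. by move=> W0; rewrite /sconjZ; case: (split i) => a; rewrite /sconj W0 ?conjc0. Qed.

(* The degree-1 part of [rho (Z, Zbar) = 0]. *)
Lemma Re_cgrad0_cjac0 d N n (rho : 'I_d -> pseries R (N + N)) (Z : 'I_N -> pseries R n) :
  (forall j, rho j 0%MM = 0) -> (forall j, real_valued (rho j)) ->
  (forall a, Z a 0%MM = 0) -> (forall j mu, scomp (rho j) (sconjZ Z) mu = 0) ->
  map_mx Re (cgrad0 rho *m cjac0 Z) = 0.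
Proof.
move=> rho0 rho_real Z0 rhoZ; apply/matrixP => j b; rewrite !mxE.
set S := \sum_a _; have : S + conjc S = 0.
  rewrite -(rhoZ j U_(b)%MM) scomp_coef1 ?rho0 // => [|i]; last exact: sconjZ_coef0.
  rewrite big_split_ord rmorph_sum /=; congr (_ + _); apply: eq_bigr => a _.
    by rewrite /sconjZ split_lshift !mxE.
  by rewrite /sconjZ split_rshift /sconj real_valued_coef1 // !mxE rmorphM.
by rewrite addcJ => /eqP; rewrite mulf_eq0 pnatr_eq0 /= => /eqP [].
Qed.

Lemma re_ker_annihilator_eq0 d N (g : 'M[C]_(d, N)) (u : 'rV[C]_N) :
  row_free g -> (forall v : 'cV_N, map_mx Re (g *m v) = 0 -> u *m v = 0) -> u = 0.
Proof.
move=> /row_freeP [B gB1] u_ker.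
suff uv0 (v : 'cV_N) : u *m v = 0.
  by apply/rowP => a; have /matrixP /(_ 0 0) := uv0 (delta_mx a 0); rewrite -colE !mxE.
(* [v - B s] and [B (i s)] lie in the real kernel, and [u (B s) = - i u (B (i s))]. *)
pose s := map_mx (fun z => real_complex R (Re z)) (g *m v).
have Re_subRe z : Re (z - real_complex R (Re z)) = 0 by case: z => ? ? /=; rewrite subrr.
have u_v_s : u *m (v - B *m s) = 0.
  apply: u_ker; rewrite mulmxBr mulmxA gB1 mul1mx; apply/matrixP => j c.
  by rewrite !mxE Re_subRe.
have u_is : u *m (B *m ('i%C *: s)) = 0.
  apply: u_ker; rewrite mulmxA gB1 mul1mx; apply/matrixP => j c.
  by rewrite !mxE /= mul0r mul1r subrr.
have i_neq0 : 'i%C != 0 :> C by rewrite eq_complex /= oner_eq0 andbF.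
move/eqP: u_is; rewrite -2!scalemxAr scalemx_eq0 (negbTE i_neq0) /= => /eqP u_s.
by move: u_v_s; rewrite mulmxBr u_s subr0.
Qed.

Section Parametrization.
Variables (d N n : nat) (rho : 'I_d -> pseries R (N + N)) (Z : 'I_N -> pseries R n).
Hypotheses (rho_def : defining_fun rho) (Z_param : param rho Z).

Lemma re_ker_colspan (v : 'cV[C]_N) :
  map_mx Re (cgrad0 rho *m v) = 0 ->
  exists x : 'cV[R]_n, v = cjac0 Z *m map_mx (real_complex R) x.
Proof.
move: rho_def Z_param => [rho0 _ rho_real Jfree] [dimN Z0 _ rhoZ rkP] Re_gv.
have JP0 : real_jac0 rho *m param_jac0 Z = 0.
  by rewrite param_jac0E real_jac0_re_im // Re_cgrad0_cjac0 // mul0rn.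
have Jv0 : real_jac0 rho *m re_im_mx v = 0 by rewrite real_jac0_re_im // Re_gv mul0rn.
have [x vx] := ker_eq_colspan Jfree rkP dimN JP0 Jv0.
by exists x; apply: re_im_mx_inj; rewrite re_im_mxM -param_jac0E.
Qed.

Lemma generic_param_row_free : generic rho -> row_free (cjac0 Z).
Proof.
move=> g_free; apply: inj_row_free => u uL0.
apply: re_ker_annihilator_eq0 g_free _ => v /re_ker_colspan [x ->].
by rewrite mulmxA uL0 mul0mx.
Qed.

End Parametrization.

End Genericity.

(** * Submanifolds of the form M_1 x {0} *)

Section Product.
Variables (R : realType) (N1 N2 : nat).
Local Notation C := R[i].
Local Notation N := (N1 + N2).

Lemma emb1_lshift (a : 'I_N1) : emb1 N2 (lshift N1 a) = lshift N (lshift N2 a).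
Proof. by rewrite /emb1 split_lshift. Qed.

Lemma emb1_rshift (a : 'I_N1) : emb1 N2 (rshift N1 a) = rshift N (lshift N2 a).
Proof. by rewrite /emb1 split_rshift. Qed.

Lemma scomp_emb1 n (F : pseries R (N1 + N1)) (V : 'I_N -> pseries R n) mu :
  (forall a, V a 0%MM = 0) ->
  scomp (scomp F (fun i => @sX R _ (emb1 N2 i))) (sconjZ V) mu
  = scomp F (sconjZ (fun a => V (lshift N2 a))) mu.
Proof.
move=> V0; rewrite scompA => [|i|i]; last 2 first.
- exact: sX_coef0.
- exact: sconjZ_coef0.
apply: eq_scompr => i nu; rewrite scomp_sX => [|j]; last exact: sconjZ_coef0.
by rewrite /sconjZ; case: (split_ordP i) => a ->;
  rewrite ?emb1_lshift ?emb1_rshift ?split_lshift ?split_rshift.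
Qed.

Definition incl1 : 'I_N -> pseries R N1 :=
  fun i => match split i with inl a => @sX R _ a | inr _ => @szero R N1 end.

Lemma incl1_coef0 i : incl1 i 0%MM = 0.
Proof. by rewrite /incl1; case: (split i) => a; rewrite ?sX_coef0. Qed.

Lemma restr1_coef0 (f : pseries R N) : restr1 f 0%MM = f 0%MM.
Proof. exact: (scomp_coef0 f incl1_coef0). Qed.

Lemma restr1_coef1 (f : pseries R N) b :
  f 0%MM = 0 -> restr1 f U_(b)%MM = f U_(lshift N2 b)%MM.
Proof.
move=> f0; rewrite /restr1 -/incl1 (scomp_coef1 incl1_coef0 _ f0) big_split_ord /=.
rewrite [X in _ + X]big1 => [|c _]; last by rewrite /incl1 split_rshift mulr0.
rewrite addr0 (bigD1 b) //= big1 => [|a a_b]; last first.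
  by rewrite /incl1 split_lshift /sX eq_mnm1 eq_sym (negbTE a_b) mulr0.
by rewrite /incl1 split_lshift /sX eqxx mulr1 addr0.
Qed.

Lemma scomp_restr1 n (f : pseries R N) (Z : 'I_N -> pseries R n) mu :
  (forall a, Z a 0%MM = 0) -> (forall b nu, Z (rshift N1 b) nu = 0) ->
  scomp (restr1 f) (fun a => Z (lshift N2 a)) mu = scomp f Z mu.
Proof.
move=> Z0 Z2_0; rewrite /restr1 -/incl1 scompA => [|i|a]; last 2 first.
- exact: incl1_coef0.
- exact: Z0.
apply: eq_scompr => i nu; case: (split_ordP i) => a ->; rewrite /incl1.
  by rewrite split_lshift scomp_sX.
by rewrite split_rshift scomp_szero Z2_0.
Qed.

Lemma re_im_eq0 (x : C) :
  x / 2%:R + conjc x / 2%:R = 0 -> x / (2%:R * 'i%C) - conjc x / (2%:R * 'i%C) = 0 ->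
  x = 0.
Proof.
have i_neq0 : 'i%C != 0 :> C by rewrite eq_complex /= oner_eq0 andbF.
rewrite -mulrDl -mulrBl => /eqP; rewrite mulf_eq0 invr_eq0 pnatr_eq0 orbF => /eqP xD.
move/eqP; rewrite mulf_eq0 invr_eq0 mulf_eq0 pnatr_eq0 (negbTE i_neq0) !orbF => /eqP xB.
move: xD xB; case: x => a b /= [xD1 xD2] [xB1 xB2].
by apply/eqP; rewrite eq_complex /=; apply/andP; split; apply/eqP; lra.
Qed.

(* The equations of [M_1 x {0}] indexed by [rshift d1 _] are [Re Z^2 = 0] and [Im Z^2 = 0]. *)
Lemma prod_def_Z2_eq0 d1 n (rho : 'I_d1 -> pseries R (N1 + N1))
    (V : 'I_N -> pseries R n) b mu :
  (forall a, V a 0%MM = 0) ->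
  scomp (@prod_def R N1 N2 d1 rho (rshift d1 (lshift N2 b))) (sconjZ V) mu = 0 ->
  scomp (@prod_def R N1 N2 d1 rho (rshift d1 (rshift N2 b))) (sconjZ V) mu = 0 ->
  V (rshift N1 b) mu = 0.
Proof.
move=> V0; set x := V (rshift N1 b) mu.
set X2 := @sX R _ (lshift N (rshift N1 b)); set X2c := @sX R _ (rshift N (rshift N1 b)).
have Vx : scomp X2 (sconjZ V) mu = x.
  by rewrite scomp_sX => [|i]; [rewrite /sconjZ split_lshift | apply: sconjZ_coef0].
have Vxc : scomp X2c (sconjZ V) mu = conjc x.
  by rewrite scomp_sX => [|i]; [rewrite /sconjZ split_rshift | apply: sconjZ_coef0].
move=> E1 E2; apply: re_im_eq0.
  apply: etrans E1; rewrite (scomp_lincomb (a := 2%:R^-1) (b := 2%:R^-1) (F1 := X2) (F2 := X2c)).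
    by rewrite Vx Vxc; ring.
  by move=> nu; rewrite /prod_def /X2 /X2c !split_rshift split_lshift; ring.
apply: etrans E2.
rewrite (scomp_lincomb (a := (2%:R * 'i%C)^-1) (b := - (2%:R * 'i%C)^-1) (F1 := X2) (F2 := X2c)).
  by rewrite Vx Vxc; ring.
by move=> nu; rewrite /prod_def /X2 /X2c !split_rshift; ring.
Qed.

End Product.

Section ProductParam.
Variables (R : realType) (N1 N2 d1 n : nat) (rho : 'I_d1 -> pseries R (N1 + N1)).
Variable Z : 'I_(N1 + N2) -> pseries R n.
Local Notation Z1 := (fun a => Z (lshift N2 a)).

Lemma rank_param_jac0_restr :
  (forall b nu, Z (rshift N1 b) nu = 0) -> \rank (param_jac0 Z1) = \rank (param_jac0 Z).
Proof.
move=> Z2_0.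
have row_emb1 i : row (emb1 N2 i) (param_jac0 Z) = row i (param_jac0 Z1).
  by apply/rowP => b; rewrite !mxE /emb1; case: (split i) => a;
    rewrite ?split_lshift ?split_rshift.
have row_Z2 i c : i = lshift _ (rshift N1 c) \/ i = rshift _ (rshift N1 c) ->
    row i (param_jac0 Z) = 0.
  by move=> [] ->; apply/rowP => b; rewrite !mxE ?split_lshift ?split_rshift Z2_0.
apply/eqP; rewrite eqn_leq; apply/andP; split; apply/mxrankS/row_subP => i.
  by rewrite -row_emb1 row_sub.
case: (split_ordP i) => c ->; case: (split_ordP c) => a ->.
- by rewrite -emb1_lshift row_emb1 row_sub.
- by rewrite (row_Z2 _ a) ?sub0mx //; left.
- by rewrite -emb1_rshift row_emb1 row_sub.
- by rewrite (row_Z2 _ a) ?sub0mx //; right.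
Qed.

Hypothesis Z_param : param (@prod_def R N1 N2 d1 rho) Z.

Lemma param_prod_Z2_eq0 b nu : Z (rshift N1 b) nu = 0.
Proof.
case: Z_param => _ Z0 _ rhoZ _.
by apply: (prod_def_Z2_eq0 (rho := rho) Z0); apply: rhoZ.
Qed.

Lemma param_prod_restr : param rho Z1.
Proof.
case: Z_param => dimN Z0 Z_conv rhoZ rkP; split => [|a|a|j mu|].
- by move: dimN; lia.
- exact: Z0.
- exact: Z_conv.
- by rewrite -scomp_emb1 // -(rhoZ (lshift _ j) mu) /prod_def split_lshift.
- by rewrite rank_param_jac0_restr // => b nu; apply: param_prod_Z2_eq0.
Qed.

End ProductParam.

Lemma formal_inv_restr (R : realType) N1 N2 (H : 'I_(N1 + N2) -> pseries R (N1 + N2)) :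
  formal_inv H -> (forall b, ord_ge 2 (restr1 (H (rshift N1 b)))) ->
  formal_inv (fun a => restr1 (H (lshift N2 a))).
Proof.
move=> [H0 H'_unit] H2_2; split => [a|]; first by rewrite restr1_coef0 H0.
set A : 'M_(N1 + N2) := \matrix_(a, b) H a U_(b)%MM in H'_unit.
have A_ul : \matrix_(a, b) restr1 (H (lshift N2 a)) U_(b)%MM = ulsubmx A.
  by apply/matrixP => a b; rewrite !mxE restr1_coef1.
have A_dl : dlsubmx A = 0.
  by apply/matrixP => b c; rewrite !mxE -restr1_coef1 // H2_2 // mdeg1.
move: H'_unit; rewrite A_ul !unitmxE !unitfE -[A]submxK A_dl det_ublock mulf_eq0.
by rewrite negb_or block_mxKul => /andP [].
Qed.

Theorem lemma4p4 (R : realType) (N1 N2 d1 k : nat)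
  (rho1 rho1' : 'I_d1 -> pseries R (N1 + N1))
  (H : 'I_(N1 + N2) -> pseries R (N1 + N2)) :
  (1 < k)%N ->
  defining_fun rho1 -> generic rho1 ->
  defining_fun rho1' -> generic rho1' ->
  kequiv k (@prod_def R N1 N2 d1 rho1) (@prod_def R N1 N2 d1 rho1') H ->
  (forall b : 'I_N2, ord_ge k (restr1 (H (rshift N1 b))))
  /\ kequiv k rho1 rho1' (fun a : 'I_N1 => restr1 (H (lshift N2 a))).
Proof.
move=> k_gt1 rho_def rho_gen _ _ [H_inv [n [Z [Z_param HZ_k]]]].
have Z2_0 := param_prod_Z2_eq0 Z_param.
have Z1_param := param_prod_restr Z_param.
have Z1_free := generic_param_row_free rho_def Z1_param rho_gen.
have [_ Z0 _ _ _] := Z_param.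
have HZ0 a : scomp (H a) Z 0%MM = 0 by rewrite scomp_coef0 //; case: H_inv.
have H2_k b : ord_ge k (restr1 (H (rshift N1 b))).
  apply: (ord_ge_scomp_row_free (k := k) (fun a => Z0 (lshift N2 a)) Z1_free) => mu mu_k.
  rewrite scomp_restr1 //.
  by apply: (prod_def_Z2_eq0 (rho := rho1') (V := fun a => scomp (H a) Z) HZ0); apply: HZ_k.
split=> //; split.
  apply: formal_inv_restr H_inv _ => b mu mu_2.
  by apply: H2_k; apply: leq_trans mu_2 k_gt1.
exists n, (fun a => Z (lshift N2 a)); split=> // j mu mu_k.
rewrite (@eq_scompr _ _ _ _ _ (sconjZ (fun a => scomp (H (lshift N2 a)) Z))) => [|i nu].
  rewrite -(@scomp_emb1 R N1 N2 n _ (fun i => scomp (H i) Z) _ HZ0).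
  by rewrite -(HZ_k (lshift _ j) mu mu_k) /prod_def split_lshift.
by rewrite /sconjZ; case: (split i) => a; rewrite /sconj ?scomp_restr1.
Qed.
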